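(* Suppose Assumptions 1 and 2 hold and the inverse demand function $p$ is convex. If $\mathbf{x}$ is a Cournot candidate with $X=\sum_{n=1}^N x_n>0$, then $p$ is differentiable at $X$, i.e., $\partial_-p(X)=\partial_+p(X)$.
   Context: Cournot model: $N$ suppliers, inverse demand $p:[0,\infty)\to[0,\infty)$, supplier $n$ has cost $C_n:[0,\infty)\to[0,\infty)$ and chooses $x_n\ge0$; $X=\sum_n x_n$. $\partial_\pm$ denote right/left derivatives; $C_n'(0)$ is the right derivative at $0$. Assumption 1: each $C_n$ is convex, continuous, nondecreasing on $[0,\infty)$, continuously differentiable on $(0,\infty)$, with $C_n(0)=0$. Assumption 2: $p$ is continuous, nonnegative, nonincreasing, $p(0)>0$; its right derivative at $0$ exists and at every $q>0$ its left and right derivatives exist. A nonnegative vector $\mathbf{x}$ is a Cournot candidate if for every $n$: $C_n'(x_n)\le p(X)+x_n\,\partial_-p(X)$ whenever $x_n>0$, and $C_n'(x_n)\ge p(X)+x_n\,\partial_+p(X)$. *)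

From Stdlib Require Import Reals Lra.
Open Scope R_scope.

Definition right_deriv (f : R -> R) (x l : R) : Prop :=
  forall eps, 0 < eps -> exists delta, 0 < delta /\
    forall h, 0 < h < delta -> Rabs ((f (x + h) - f x) / h - l) < eps.

Definition left_deriv (f : R -> R) (x l : R) : Prop :=
  forall eps, 0 < eps -> exists delta, 0 < delta /\
    forall h, 0 < h < delta -> Rabs ((f x - f (x - h)) / h - l) < eps.

Definition continuous_on_nonneg (f : R -> R) : Prop :=
  forall x, 0 <= x -> forall eps, 0 < eps -> exists delta, 0 < delta /\
    forall y, 0 <= y -> Rabs (y - x) < delta -> Rabs (f y - f x) < eps.

Definition convex_on_nonneg (f : R -> R) : Prop :=
  forall x y t, 0 <= x -> 0 <= y -> 0 <= t <= 1 ->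
    f (t * x + (1 - t) * y) <= t * f x + (1 - t) * f y.

Definition nondecreasing_on_nonneg (f : R -> R) : Prop :=
  forall x y, 0 <= x -> x <= y -> f x <= f y.

Definition nonincreasing_on_nonneg (f : R -> R) : Prop :=
  forall x y, 0 <= x -> x <= y -> f y <= f x.

Definition Assumption1 (C C' : R -> R) : Prop :=
  convex_on_nonneg C /\ continuous_on_nonneg C /\ nondecreasing_on_nonneg C /\
  C 0 = 0 /\
  (forall x, 0 < x -> derivable_pt_lim C x (C' x)) /\
  (forall x, 0 < x -> continuity_pt C' x) /\
  right_deriv C 0 (C' 0).

Definition Assumption2 (p dpL dpR : R -> R) : Prop :=
  continuous_on_nonneg p /\ (forall q, 0 <= q -> 0 <= p q) /\
  nonincreasing_on_nonneg p /\ 0 < p 0 /\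
  (forall q, 0 <= q -> right_deriv p q (dpR q)) /\
  (forall q, 0 < q -> left_deriv p q (dpL q)).

Fixpoint total (N : nat) (x : nat -> R) : R :=
  match N with
  | O => 0
  | S k => total k x + x k
  end.

Definition cournot_candidate (N : nat) (C' : nat -> R -> R)
  (p dpL dpR : R -> R) (x : nat -> R) : Prop :=
  (forall n, (n < N)%nat -> 0 <= x n) /\
  (forall n, (n < N)%nat ->
     (0 < x n -> C' n (x n) <= p (total N x) + x n * dpL (total N x)) /\
     C' n (x n) >= p (total N x) + x n * dpR (total N x)).

(* The argument has two halves, each giving one inequality between the
   one-sided derivatives of p at X.
   - Convexity: for a convex function the backward secant slope
     (p X - p (X - h)) / h never exceeds the forward one
     (p (X + h) - p X) / h; passing to the limit h -> 0+ gives
     dpL X <= dpR X (lemma [convex_left_deriv_le_right_deriv]).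
   - Equilibrium: since X > 0 some supplier n produces x n > 0, so both
     first-order conditions of the candidate apply to n; subtracting them
     gives x n * dpR X <= x n * dpL X, hence dpR X <= dpL X
     (lemma [active_supplier_right_deriv_le_left_deriv]). *)

From Stdlib Require Import Reals Lra Lia.
Open Scope R_scope.

Lemma total_pos_has_pos_term (N : nat) (x : nat -> R) :
  0 < total N x -> exists n, (n < N)%nat /\ 0 < x n.
Proof.
  induction N as [|k IH]; simpl; intro Hpos.
  - lra.
  - destruct (Rlt_le_dec 0 (x k)) as [Hk|Hk].
    + exists k; split; [lia|exact Hk].
    + destruct IH as [n [Hn Hxn]]; [lra|].
      exists n; split; [lia|exact Hxn].
Qed.

(* Midpoint convexity at X between X - h and X + h, rewritten as the
   comparison of the backward and forward secant slopes. *)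
Lemma convex_secant_slopes (f : R -> R) (X h : R) :
  convex_on_nonneg f -> 0 < h <= X ->
  (f X - f (X - h)) / h <= (f (X + h) - f X) / h.
Proof.
  intros Hconv Hh.
  assert (Hmid : f X <= 1/2 * f (X - h) + (1 - 1/2) * f (X + h)).
  { pose proof (Hconv (X - h) (X + h) (1/2) ltac:(lra) ltac:(lra) ltac:(lra))
      as Hc.
    replace (1/2 * (X - h) + (1 - 1/2) * (X + h)) with X in Hc by field.
    exact Hc. }
  unfold Rdiv; apply Rmult_le_compat_r.
  - left; apply Rinv_0_lt_compat; lra.
  - lra.
Qed.

Lemma right_limit_le (g k : R -> R) (l r d0 : R) :
  0 < d0 ->
  (forall h, 0 < h < d0 -> g h <= k h) ->
  (forall eps, 0 < eps -> exists d, 0 < d /\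
     forall h, 0 < h < d -> Rabs (g h - l) < eps) ->
  (forall eps, 0 < eps -> exists d, 0 < d /\
     forall h, 0 < h < d -> Rabs (k h - r) < eps) ->
  l <= r.
Proof.
  intros Hd0 Hle Hg Hk.
  destruct (Rle_dec l r) as [|Hlr]; [assumption|exfalso].
  set (eps := (l - r) / 2).
  assert (Heps : 0 < eps) by (unfold eps; lra).
  destruct (Hg eps Heps) as [d1 [Hd1 Hg1]].
  destruct (Hk eps Heps) as [d2 [Hd2 Hk2]].
  set (h := Rmin d0 (Rmin d1 d2) / 2).
  assert (Hmin : 0 < Rmin d0 (Rmin d1 d2)) by (repeat apply Rmin_pos; lra).
  pose proof (Rmin_l d0 (Rmin d1 d2)); pose proof (Rmin_r d0 (Rmin d1 d2)).
  pose proof (Rmin_l d1 d2); pose proof (Rmin_r d1 d2).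
  destruct (Rabs_def2 _ _ (Hg1 h ltac:(unfold h; lra))).
  destruct (Rabs_def2 _ _ (Hk2 h ltac:(unfold h; lra))).
  pose proof (Hle h ltac:(unfold h; lra)).
  unfold eps in *; lra.
Qed.

Lemma convex_left_deriv_le_right_deriv (f : R -> R) (X l r : R) :
  convex_on_nonneg f -> 0 < X ->
  left_deriv f X l -> right_deriv f X r -> l <= r.
Proof.
  intros Hconv HX Hl Hr.
  apply (right_limit_le (fun h => (f X - f (X - h)) / h)
                        (fun h => (f (X + h) - f X) / h) l r X HX).
  - intros h Hh; apply convex_secant_slopes; [exact Hconv|lra].
  - exact Hl.
  - exact Hr.
Qed.

Lemma active_supplier_right_deriv_le_left_deriv
  (N : nat) (C' : nat -> R -> R) (p dpL dpR : R -> R) (x : nat -> R) (n : nat) :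
  cournot_candidate N C' p dpL dpR x -> (n < N)%nat -> 0 < x n ->
  dpR (total N x) <= dpL (total N x).
Proof.
  intros [_ Hfoc] Hn Hxn.
  destruct (Hfoc n Hn) as [Hupper Hlower].
  specialize (Hupper Hxn).
  apply (Rmult_le_reg_l (x n)); [exact Hxn|lra].
Qed.

Theorem proposition3 (N : nat) (C C' : nat -> R -> R) (p dpL dpR : R -> R)
  (x : nat -> R) :
  (forall n, (n < N)%nat -> Assumption1 (C n) (C' n)) ->
  Assumption2 p dpL dpR ->
  convex_on_nonneg p ->
  cournot_candidate N C' p dpL dpR x ->
  0 < total N x ->
  dpL (total N x) = dpR (total N x).
Proof.
  intros _ [_ [_ [_ [_ [Hright Hleft]]]]] Hconv Hcand Hpos.
  destruct (total_pos_has_pos_term N x Hpos) as [n [Hn Hxn]].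
  assert (Hle : dpL (total N x) <= dpR (total N x)).
  { apply (convex_left_deriv_le_right_deriv p (total N x)); try assumption.
    - apply Hleft; exact Hpos.
    - apply Hright; lra. }
  pose proof (active_supplier_right_deriv_le_left_deriv
                N C' p dpL dpR x n Hcand Hn Hxn).
  lra.
Qed.
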